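(* Let $\widehat{\Gamma}$ be a Harnack graph with controlled, uniformly lazy weights $(\pi,\mu)$, $K$ a set of vertices, $\Gamma:=\widehat\Gamma\setminus K$, and $V_{\partial\Gamma}(x,r)=\pi(B_{\widehat\Gamma}(x,r)\cap\partial\Gamma)$. Assume in addition that $V_{\partial\Gamma}$ is doubling: there is $D>0$ with $V_{\partial\Gamma}(z,2r)\le D\,V_{\partial\Gamma}(z,r)$ for all $z\in\partial\Gamma$, $r>0$. For $x\in\Gamma$ let $v_x\in\partial\Gamma$ be a point achieving $d(x,K)$, set $d_x:=d(x,K)$ and $\widetilde W(x,r):=V_{\widehat\Gamma}(x,r)/V_{\partial\Gamma}(v_x,r)$. Then there is a constant $C$ such that \[\psi_K(x)\le\sum_{n\ge d_x^2}\frac{C}{\widetilde W(x,\sqrt n)}\qquad\text{for all }x\in\Gamma\setminus\partial_I\Gamma.\]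
   Context: $\widehat{\Gamma}=(\widehat V,\widehat E)$ is an infinite simple connected graph with symmetric edge weights $\mu_{xy}=\mu_{yx}$, $\mu_{xy}\ne0$ iff $x\sim y$, vertex weights $\pi>0$ with $\sum_{y\sim x}\mu_{xy}\le\pi(x)$; Markov kernel $\mathcal{K}(x,y)=\mu_{xy}/\pi(x)$ ($x\neq y$), $\mathcal{K}(x,x)=1-\sum_{z\sim x}\mu_{xz}/\pi(x)$. Controlled weights: $\exists C_c>1$ with $\mu_{xy}/\pi(x)\ge1/C_c$ for all $y\sim x$. Uniformly lazy: $\exists C_e\in(0,1)$ with $\mathcal{K}(x,x)\ge C_e$. $d$ is graph distance, $B_{\widehat\Gamma}(x,r)=\{y:d(x,y)\le r\}$, $V_{\widehat\Gamma}(x,r)=\pi(B_{\widehat\Gamma}(x,r))$. Heat kernel $p(n,x,y)=\mathcal{K}^n(x,y)/\pi(y)$; Harnack graph means two-sided Gaussian bounds $\frac{c_1}{V(x,\sqrt n)}e^{-d(x,y)^2/(c_2n)}\le p(n,x,y)\le\frac{c_3}{V(x,\sqrt n)}e^{-d(x,y)^2/(c_4 n)}$ for all $x,y$, $n\ge d(x,y)$. $\Gamma$ is the induced subgraph on $\widehat V\setminus K$; $\partial\Gamma$ = vertices outside $\Gamma$ adjacent to $\Gamma$; $\partial_I\Gamma$ = vertices of $\Gamma$ adjacent to a vertex outside $\Gamma$. $\psi_K(x)=\mathbb{P}^x(\tau_K<\infty)$, $\tau_K=\min\{n\ge0:X_n\in K\}$. *)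

From HB Require Import structures.
From mathcomp Require Import all_boot all_order all_algebra.
From mathcomp Require Import all_classical all_reals all_analysis.
Set Implicit Arguments. Unset Strict Implicit. Unset Printing Implicit Defensive.
Import Order.TTheory GRing.Theory Num.Theory.
Local Open Scope ring_scope.
Local Open Scope classical_set_scope.

(* A (locally finite) graph on vertex type V is given by its neighbour lists:
   y ~ x  iff  y \in nbrs x. *)
Section Graph.
Variables (R : realType) (V : choiceType) (nbrs : V -> seq V).
Variables (mu : V -> V -> R) (pi : V -> R).

Definition adj (x y : V) : bool := y \in nbrs x.

Definition simple_graph : Prop :=
  (forall x, uniq (nbrs x)) /\ (forall x, ~~ adj x x) /\
  (forall x y, adj x y = adj y x).

Definition walk (x y : V) (n : nat) : Prop :=
  exists p : seq V, [/\ path adj x p, last x p = y & size p = n].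

Definition connected_graph : Prop := forall x y, exists n, walk x y n.

(* graph distance (0 if no walk exists, irrelevant under connectedness) *)
Definition dist (x y : V) : nat :=
  match pselect (exists n, `[< walk x y n >]) with
  | left h => ex_minn h
  | right _ => 0%N
  end.

Definition ball_g (x : V) (r : R) : set V := [set y | (dist x y)%:R <= r].

(* V(x,r) = pi(B(x,r)); the ball is finite for a locally finite graph *)
Definition vol (x : V) (r : R) : R := (\sum_(y \in ball_g x r) pi y)%R.

Definition weights_ok : Prop :=
  (forall x y, mu x y = mu y x) /\
  (forall x y, mu x y != 0 <-> adj x y) /\
  (forall x, 0 < pi x) /\
  (forall x, \sum_(y <- nbrs x) mu x y <= pi x).

Definition kern (x y : V) : R :=
  if y == x then 1 - \sum_(z <- nbrs x) mu x z / pi x else mu x y / pi x.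

Definition controlled : Prop :=
  exists Cc : R, 1 < Cc /\ forall x y, adj x y -> 1 / Cc <= mu x y / pi x.

Definition uniformly_lazy : Prop :=
  exists Ce : R, 0 < Ce < 1 /\ forall x, Ce <= kern x x.

(* n-step kernel K^n(x,y); the chain from x only moves to x or neighbours *)
Fixpoint kern_pow (n : nat) (x y : V) : R :=
  match n with
  | 0 => (x == y)%:R
  | n'.+1 => \sum_(z <- x :: nbrs x) kern x z * kern_pow n' z y
  end.

Definition heat (n : nat) (x y : V) : R := kern_pow n x y / pi y.

(* two-sided Gaussian bounds (Harnack graph) *)
Definition harnack : Prop :=
  exists c1 c2 c3 c4 : R, [/\ 0 < c1, 0 < c2, 0 < c3 & 0 < c4] /\
  forall (n : nat) x y, (dist x y <= n)%N ->
    c1 / vol x (Num.sqrt n%:R) * expR (- ((dist x y)%:R ^+ 2) / (c2 * n%:R))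
      <= heat n x y /\
    heat n x y <=
      c3 / vol x (Num.sqrt n%:R) * expR (- ((dist x y)%:R ^+ 2) / (c4 * n%:R)).

Variable K : set V.

Definition in_Gamma (x : V) : Prop := ~ K x.
Definition bdry (z : V) : Prop := K z /\ exists y, adj z y /\ ~ K y.
Definition inner_bdry (x : V) : Prop := ~ K x /\ exists y, adj x y /\ K y.

Definition vol_bdry (x : V) (r : R) : R :=
  (\sum_(y \in ball_g x r `&` bdry) pi y)%R.

(* P^x(tau_K <= n), by first-step analysis of the chain with kernel kern *)
Fixpoint hit_by (n : nat) (x : V) : R :=
  if `[< K x >] then 1 else
  match n with
  | 0 => 0
  | n'.+1 => \sum_(z <- x :: nbrs x) kern x z * hit_by n' z
  end.

(* psi_K(x) = P^x(tau_K < oo) = sup_n P^x(tau_K <= n) (increasing limit) *)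
Definition psiK (x : V) : R := sup [set hit_by n x | n in [set: nat]].

Definition Wtilde (x v : V) (r : R) : R := vol x r / vol_bdry v r.

End Graph.

From Pilot Require Import Defs.
From HB Require Import structures.
From mathcomp Require Import all_boot all_order all_algebra.
From mathcomp Require Import all_classical all_reals all_analysis.
From mathcomp Require Import ring zify.
Import Order.TTheory GRing.Theory Num.Theory.
Local Open Scope ring_scope.
Local Open Scope classical_set_scope.
Set Implicit Arguments. Unset Strict Implicit. Unset Printing Implicit Defensive.

(* Started outside [K], the chain enters [K] through the boundary, so by a union bound
   over time psi_K(x) <= sum_n P^x(X_n in dGamma) = sum_n sum_(w in dGamma) p(n,x,w) pi(w).
   Split the Gaussian upper bound exp(-d(x,w)^2/(c4 n)) into two halves.  Since
   d(x,w) >= d_x, the first half is at most exp(-d_x^2/(2 c4 n)).  Since d(v_x,w) <= 2 d(x,w),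
   the second half is dominated by a weighted sum of indicators of dyadic balls around v_x,
   and doubling of V_dGamma bounds its integral by a constant times
   V_dGamma(v_x, sqrt(n + d_x^2)).  The two-sided Gaussian bounds also give
   V(x, sqrt(n + d_x^2)) exp(-d_x^2/(2 c4 n)) <= M V(x, sqrt n), so the n-th term is at most
   C / W~(x, sqrt(n + d_x^2)); the shift n -> n + d_x^2 yields the series. *)

Section Walks.
Variables (V : choiceType) (nbrs : V -> seq V).
Local Notation adj := (adj nbrs).
Local Notation walk := (walk nbrs).
Local Notation dist := (dist nbrs).

Lemma walk_nil x : walk x x 0.
Proof. by exists [::]. Qed.

Lemma walk_cat x y z a b : walk x y a -> walk y z b -> walk x z (a + b).
Proof.
move=> [p [xp px <-]] [q [yq qy <-]]; exists (p ++ q).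
by rewrite cat_path xp px yq last_cat px qy size_cat.
Qed.

Lemma walk_rev x y a : (forall u w, adj u w = adj w u) -> walk x y a -> walk y x a.
Proof.
move=> adjC [p [xp <- <-]]; exists (rev (belast x p)); split.
- by rewrite rev_path; apply: sub_path xp => u w /=; rewrite adjC.
- by case: p {xp} => [|z p] //=; rewrite rev_cons last_rcons.
- by rewrite size_rev size_belast.
Qed.

Lemma dist_le_walk x y a : walk x y a -> (dist x y <= a)%N.
Proof.
move=> xy; rewrite /dist; case: pselect => [h|[]]; last by exists a; apply/asboolP.
by case: ex_minnP => m _; apply; apply/asboolP.
Qed.

Lemma walk_dist x y : (exists a, walk x y a) -> walk x y (dist x y).
Proof.
move=> [a xy]; rewrite /dist; case: pselect => [h|[]]; last by exists a; apply/asboolP.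
by case: ex_minnP => m /asboolP.
Qed.

Lemma dist_xx x : dist x x = 0%N.
Proof. by apply/eqP; rewrite -leqn0; apply/dist_le_walk/walk_nil. Qed.

Fixpoint reach (n : nat) (v : V) : seq V :=
  if n is n'.+1 then flatten [seq reach n' z | z <- v :: nbrs v] else [:: v].

Lemma reach_refl n v : v \in reach n v.
Proof.
elim: n v => [|n IH] v; first by rewrite inE.
by apply/flatten_mapP; exists v; rewrite ?inE ?eqxx.
Qed.

Lemma reach_le n m v w : (n <= m)%N -> w \in reach n v -> w \in reach m v.
Proof.
elim: n m v => [|n IH] [|m] v // nm.
  by rewrite inE => /eqP ->; apply: (reach_refl m.+1).
move=> /flatten_mapP [z zv /(IH m z nm) wz]; apply/flatten_mapP; exists z => //.
Qed.

Lemma walk_reach a v w : walk v w a -> w \in reach a v.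
Proof.
move=> [p [vp <- <-]]; elim: p v vp => [|z p IH] v; first by rewrite inE.
move=> /andP [vz zp]; change (last z p \in reach (size p).+1 v).
by apply/flatten_mapP; exists z; [rewrite inE; apply/orP; right | apply: IH].
Qed.

Lemma reach_walk n v w : w \in reach n v -> exists2 a, (a <= n)%N & walk v w a.
Proof.
elim: n v => [|n IH] v; first by rewrite inE => /eqP ->; exists 0%N => //; apply: walk_nil.
move=> /flatten_mapP [z]; rewrite inE => /orP [/eqP -> | zv] /IH [a an wa].
  by exists a => //; apply: leqW.
by exists (1 + a)%N => //; apply: walk_cat wa; exists [:: z]; split => //=; rewrite andbT.
Qed.

Lemma reach_dist n v w : w \in reach n v -> (dist v w <= n)%N.
Proof. by move=> /reach_walk [a an /dist_le_walk /leq_trans]; apply. Qed.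

Hypothesis adjC : forall u w, adj u w = adj w u.
Hypothesis conn : forall x y, exists a, walk x y a.

Lemma dist_sym x y : dist x y = dist y x.
Proof.
by apply/eqP; rewrite eqn_leq !dist_le_walk //; apply: walk_rev => //; apply: walk_dist.
Qed.

Lemma dist_triangle x y z : (dist x z <= dist x y + dist y z)%N.
Proof. by apply/dist_le_walk/walk_cat; apply: walk_dist. Qed.

Lemma dist_reach n v w : (dist v w <= n)%N -> w \in reach n v.
Proof. by move=> vw; apply: reach_le vw _; apply/walk_reach/walk_dist. Qed.

End Walks.

Section MarkovChain.
Variables (R : realType) (V : choiceType) (nbrs : V -> seq V).
Variables (mu : V -> V -> R) (pi : V -> R).
Local Notation kern := (kern nbrs mu pi).
Local Notation kern_pow := (kern_pow nbrs mu pi).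
Hypothesis kern_ge0 : forall x y, 0 <= kern x y.
Hypothesis nbrs_irr : forall x, x \notin nbrs x.

Lemma kern_sum1 x : \sum_(z <- x :: nbrs x) kern x z = 1.
Proof.
rewrite big_cons {1}/Defs.kern eqxx [X in _ + X](eq_big_seq (fun z => mu x z / pi x)) ?subrK //.
move=> z zx; rewrite /Defs.kern ifF //; apply: contraNF (nbrs_irr x) => /eqP zxE.
by rewrite -[X in X \in _]zxE.
Qed.

Lemma kern_pow_ge0 n x y : 0 <= kern_pow n x y.
Proof.
elim: n x => [|n IH] x /=; first exact: ler0n.
by apply: sumr_ge0 => z _; apply: mulr_ge0.
Qed.

Lemma sum_delta (L : seq V) x (F : V -> R) : uniq L ->
  \sum_(y <- L) (x == y)%:R * F y = (x \in L)%:R * F x.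
Proof.
elim: L => [|a L IH]; first by rewrite big_nil mul0r.
rewrite big_cons inE => /= /andP [aL /IH ->]; case: eqVneq => [->|_].
  by rewrite (negbTE aL) mul0r addr0.
by rewrite mul0r add0r.
Qed.

Lemma kern_pow_sum_le1 n x (L : seq V) : uniq L -> \sum_(y <- L) kern_pow n x y <= 1.
Proof.
move=> uL; elim: n x => [|n IH] x /=.
  rewrite (eq_bigr (fun y => (x == y)%:R * 1)) => [|y _]; last by rewrite mulr1.
  by rewrite sum_delta // mulr1 lern1 leq_b1.
rewrite exchange_big /= -(kern_sum1 x); apply: ler_sum => z _.
by rewrite -mulr_sumr ler_piMr.
Qed.

Lemma kern_pow_diag_ge (c : R) n x : 0 <= c -> c <= kern x x -> c ^+ n <= kern_pow n x x.
Proof.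
move=> c0 cx; elim: n => [|n IH] /=; first by rewrite eqxx.
rewrite big_cons exprS -[_ * _]addr0; apply: lerD; first by rewrite ler_pM ?exprn_ge0.
by apply: sumr_ge0 => z _; rewrite mulr_ge0 ?kern_pow_ge0.
Qed.

Fixpoint prob_in (B : set V) (n : nat) (y : V) : R :=
  if n is n'.+1 then \sum_(z <- y :: nbrs y) kern y z * prob_in B n' z
  else `[< B y >]%:R.

Lemma prob_in_ge0 B n y : 0 <= prob_in B n y.
Proof.
elim: n y => [|n IH] y /=; first exact: ler0n.
by apply: sumr_ge0 => z _; apply: mulr_ge0.
Qed.

Lemma prob_inE B n y (L : seq V) : uniq L -> {subset reach nbrs n y <= L} ->
  prob_in B n y = \sum_(w <- L) kern_pow n y w * `[< B w >]%:R.
Proof.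
move=> uL; elim: n y => [|n IH] y yL /=.
  by rewrite sum_delta // yL ?mul1r // reach_refl.
rewrite (eq_big_seq (fun z => \sum_(w <- L) kern y z * (kern_pow n z w * `[< B w >]%:R))).
  rewrite exchange_big /=; apply: eq_bigr => w _; rewrite mulr_suml.
  by apply: eq_bigr => z _; rewrite mulrA.
move=> z zy; rewrite (IH z) ?mulr_sumr // => w wz; apply: yL.
by apply/flatten_mapP; exists z.
Qed.

Variable K : set V.
Hypothesis adjC : forall u w, adj nbrs u w = adj nbrs w u.

(* To reach [K] from outside, the chain must first step onto [bdry K]. *)
Lemma hit_by_le_sum_prob_in m y : (K y -> bdry nbrs K y) ->
  hit_by nbrs mu pi K m y <= \sum_(n < m.+1) prob_in (bdry nbrs K) n y.
Proof.
elim: m y => [|m IH] y Ky; rewrite big_ord_recl /=.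
  rewrite big_ord0 addr0; case: ifPn => [/asboolP /Ky By | _]; last exact: ler0n.
  by rewrite asboolT.
case: ifPn => [/asboolP /Ky By | /asboolP yK].
  rewrite asboolT // lerDl; apply: sumr_ge0 => i _; exact: (prob_in_ge0 _ i.+1).
apply: ler_wpDl; first exact: ler0n.
apply: le_trans (_ : \sum_(z <- y :: nbrs y) kern y z *
    \sum_(n < m.+1) prob_in (bdry nbrs K) n z <= _).
  rewrite big_seq [leRHS]big_seq; apply: ler_sum => z zy.
  apply: ler_wpM2l => //; apply: IH => Kz; split => //; exists y; split => //.
  by move: zy; rewrite inE adjC => /orP [/eqP zy | //]; move: Kz; rewrite zy.
rewrite (eq_bigr (fun z => \sum_(n < m.+1) kern y z * prob_in (bdry nbrs K) n z)).
  by rewrite exchange_big; apply: ler_sum => i _; rewrite add0n.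
by move=> z _; rewrite mulr_sumr.
Qed.

End MarkovChain.

Lemma sum_seq_le_fsbig (R : numDomainType) (T : choiceType) (A : set T) (F : T -> R)
    (S : seq T) :
  finite_set A -> (forall i, A i -> 0 <= F i) -> uniq S -> [set` S] `<=` A ->
  \sum_(w <- S) F w <= \sum_(i \in A) F i.
Proof.
move=> finA F0 uS SA; rewrite fsbig_seq // [leRHS](fsbigID [set` S]) // setIidr //.
by rewrite lerDl; apply: fsumr_ge0 => i [/F0].
Qed.

Lemma fsbig_seqE (R : nmodType) (T : choiceType) (A : set T) (F : T -> R) :
  exists2 S : seq T, uniq S /\ {in S, forall i, A i} &
    \sum_(i \in A) F i = \sum_(i <- S) F i.
Proof.
case: finite_supportP => [_|X XA _ _]; first by exists [::].
by exists (finmap.enum_fset X) => //; split => [|i /XA //]; exact: finmap.fset_uniq.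
Qed.

Section Volumes.
Variables (R : realType) (V : choiceType) (nbrs : V -> seq V) (pi : V -> R).
Hypothesis conn : forall x y, exists a, walk nbrs x y a.
Hypothesis pi_gt0 : forall x, 0 < pi x.
Local Notation vol := (vol nbrs pi).

Lemma ball_g_finite x (r : R) : finite_set (ball_g nbrs x r).
Proof.
apply: (@sub_finite_set _ _ [set` reach nbrs (Num.bound `|r|) x]); last exact: finite_seq.
move=> y xy; apply/(dist_reach conn)/ltnW; rewrite -(ltr_nat R).
by apply: le_lt_trans (archi_boundP (normr_ge0 r)); apply: le_trans xy (ler_norm r).
Qed.

Lemma sum_le_vol x (r : R) (S : seq V) : uniq S ->
  {in S, forall w, (dist nbrs x w)%:R <= r} -> \sum_(w <- S) pi w <= vol x r.
Proof.
move=> uS Sr; apply: sum_seq_le_fsbig => //; first exact: ball_g_finite.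
by move=> *; apply: ltW.
Qed.

Lemma vol_ge0 x (r : R) : 0 <= vol x r.
Proof. by apply: fsumr_ge0 => y _; apply: ltW. Qed.

Lemma pi_le_vol x (r : R) : 0 <= r -> pi x <= vol x r.
Proof.
move=> r0; have := @sum_le_vol x r [:: x] isT; rewrite big_seq1; apply.
by move=> w; rewrite inE => /eqP ->; rewrite dist_xx.
Qed.

Lemma vol_gt0 x (r : R) : 0 <= r -> 0 < vol x r.
Proof. by move=> r0; apply: lt_le_trans (pi_le_vol x r0). Qed.

Variable K : set V.
Local Notation vol_bdry := (vol_bdry nbrs pi K).

Lemma vol_bdry_ge0 v (r : R) : 0 <= vol_bdry v r.
Proof. by apply: fsumr_ge0 => y _; apply: ltW. Qed.

Lemma sum_le_vol_bdry v (r : R) (S : seq V) : uniq S ->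
  {in S, forall w, (dist nbrs v w)%:R <= r /\ bdry nbrs K w} ->
  \sum_(w <- S) pi w <= vol_bdry v r.
Proof.
move=> uS Sr; apply: sum_seq_le_fsbig => //; last by move=> *; apply: ltW.
exact/finite_setIl/ball_g_finite.
Qed.

End Volumes.

Lemma sqrt_nat_le (R : rcfType) (a b : nat) : (a <= b ^ 2)%N -> Num.sqrt a%:R <= b%:R :> R.
Proof.
move=> ab; rewrite -[leRHS]ger0_norm // -sqrtr_sqr ler_sqrt ?exprn_ge0 //.
by rewrite -natrX ler_nat.
Qed.

Section HarnackVolume.
Variables (R : realType) (V : choiceType) (nbrs : V -> seq V).
Variables (mu : V -> V -> R) (pi : V -> R) (c1 c2 c3 c4 : R).
Local Notation vol := (vol nbrs pi).
Local Notation dist := (dist nbrs).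
Hypothesis kern_ge0 : forall x y, 0 <= kern nbrs mu pi x y.
Hypothesis nbrs_irr : forall x, x \notin nbrs x.
Hypothesis conn : forall x y, exists a, walk nbrs x y a.
Hypothesis pi_gt0 : forall x, 0 < pi x.
Hypotheses (c1_gt0 : 0 < c1) (c2_gt0 : 0 < c2) (c3_gt0 : 0 < c3) (c4_gt0 : 0 < c4).
Hypothesis harn : forall (n : nat) x y, (dist x y <= n)%N ->
    c1 / vol x (Num.sqrt n%:R) * expR (- ((dist x y)%:R ^+ 2) / (c2 * n%:R))
      <= heat nbrs mu pi n x y /\
    heat nbrs mu pi n x y <=
      c3 / vol x (Num.sqrt n%:R) * expR (- ((dist x y)%:R ^+ 2) / (c4 * n%:R)).

Lemma vol_sqrt_gt0 x (n : nat) : 0 < vol x (Num.sqrt n%:R).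
Proof. exact/(vol_gt0 conn pi_gt0)/sqrtr_ge0. Qed.

(* The Gaussian lower bound integrated over [B(x,r)] is at most the total mass 1. *)
Lemma vol_mul_gauss_le1 x (r : R) (m : nat) : 0 <= r -> r <= m%:R ->
  vol x r * (c1 / vol x (Num.sqrt m%:R) * expR (- (r ^+ 2) / (c2 * m%:R))) <= 1.
Proof.
move=> r0 rm; have [S [uS Sr] volE] := fsbig_seqE (ball_g nbrs x r) pi.
rewrite {1}/Defs.vol volE mulr_suml; apply: le_trans (kern_pow_sum_le1 kern_ge0 nbrs_irr m x uS).
rewrite big_seq [leRHS]big_seq; apply: ler_sum => y /Sr xy.
have xym : (dist x y <= m)%N by rewrite -(ler_nat R); apply: le_trans xy rm.
rewrite mulrC -ler_pdivlMr //; apply: le_trans (proj1 (harn xym)).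
apply: ler_wpM2l; first by rewrite divr_ge0 ?(vol_ge0 _ pi_gt0) ?ltW.
rewrite ler_expR; apply: ler_wpM2r; first by rewrite invr_ge0 mulr_ge0 ?ler0n ?ltW.
by rewrite lerN2 lerXn2r ?nnegrE ?ler0n.
Qed.

(* Laziness gives [K^m(x,x) >= c^m], against the Gaussian upper bound at [y = x]. *)
Lemma vol_mul_lazy_le x (m : nat) (c : R) : 0 <= c -> c <= kern nbrs mu pi x x ->
  vol x (Num.sqrt m%:R) * c ^+ m <= c3 * pi x.
Proof.
move=> c0 cx; have xx : (dist x x <= m)%N by rewrite dist_xx.
have [_] := harn xx; rewrite dist_xx expr0n /= oppr0 mul0r expR0 mulr1 /heat ler_pdivrMr //.
move=> /(le_trans (kern_pow_diag_ge kern_ge0 m c0 cx)).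
by rewrite mulrAC ler_pdivlMr ?vol_sqrt_gt0 // mulrC.
Qed.

Variable Ce : R.
Hypotheses (Ce_gt0 : 0 < Ce) (Ce_le1 : Ce <= 1).
Hypothesis lazy : forall x, Ce <= kern nbrs mu pi x x.

(* For [n >= j] by the Gaussian lower bound, for [n < j] by laziness. *)
Lemma vol_sqrt_scale j : exists2 M : R, 0 <= M & forall x (n : nat), (1 <= n)%N ->
  vol x (Num.sqrt (j * n)%:R) <= M * vol x (Num.sqrt n%:R).
Proof.
exists (expR (j%:R / c2) / c1 + c3 / Ce ^+ (j * j)).
  by rewrite addr_ge0 ?divr_ge0 ?expR_ge0 ?exprn_ge0 ?ltW.
move=> x n n1; have Vn := vol_sqrt_gt0 x n.
have [jn | nj] := leqP j n.
  apply: le_trans (_ : expR (j%:R / c2) / c1 * vol x (Num.sqrt n%:R) <= _); last first.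
    by apply: ler_wpM2r; [exact: ltW | rewrite lerDl divr_ge0 ?exprn_ge0 ?ltW].
  have jnn : (j * n <= n ^ 2)%N by rewrite leq_mul2r jn orbT.
  have := vol_mul_gauss_le1 x (sqrtr_ge0 _) (sqrt_nat_le R jnn).
  have -> : - (Num.sqrt (j * n)%:R ^+ 2) / (c2 * n%:R) = - (j%:R / c2) :> R.
    by rewrite sqr_sqrtr ?ler0n // natrM; field; rewrite !lt0r_neq0 ?ltr0n.
  rewrite -ler_pdivlMr ?mulr_gt0 ?divr_gt0 ?expR_gt0 ?invr_gt0 // => /le_trans; apply.
  by rewrite expRN le_eqVlt; apply/orP; left; apply/eqP; field;
    rewrite !lt0r_neq0 ?expR_gt0.
apply: le_trans (_ : c3 / Ce ^+ (j * j) * vol x (Num.sqrt n%:R) <= _); last first.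
  by apply: ler_wpM2r; [exact: ltW | rewrite lerDr divr_ge0 ?expR_ge0 ?ltW].
have Cjj : Ce ^+ (j * j) <= Ce ^+ (j * n).
  by apply: ler_wiXn2l => //; [exact: ltW | rewrite leq_mul2l ltnW ?orbT].
rewrite mulrAC ler_pdivlMr ?exprn_gt0 //.
apply: le_trans (ler_wpM2l (vol_ge0 _ pi_gt0 _ _) Cjj) _.
apply: le_trans (@vol_mul_lazy_le x (j * n) Ce (ltW Ce_gt0) (lazy x)) _.
by apply: ler_wpM2l; [exact: ltW | apply: (pi_le_vol conn pi_gt0); apply: sqrtr_ge0].
Qed.

(* Lower bound at time [j n] with [c2 j >= 2 c4] over radius [sqrt (n + d^2)],
   then rescale [sqrt (j n)] back to [sqrt n]. *)
Lemma vol_shift_le : exists2 M : R, 0 <= M & forall x (n d : nat), (1 <= n)%N -> (d <= n)%N ->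
  vol x (Num.sqrt (n + d ^ 2)%:R) * expR (- (d%:R ^+ 2) / (2 * c4 * n%:R))
    <= M * vol x (Num.sqrt n%:R).
Proof.
set j := (Num.bound (2 * c4 / c2)).+2.
have jc : 2 * c4 <= c2 * j%:R.
  have := archi_boundP (divr_ge0 (mulr_ge0 (ler0n R 2) (ltW c4_gt0)) (ltW c2_gt0)).
  rewrite ltr_pdivrMr // [ltRHS]mulrC => /ltW /le_trans; apply.
  by rewrite ler_pM2l // ler_nat /j; apply: leqW; apply: leqW.
have [M M0 scale] := vol_sqrt_scale j.
have e0 : 0 < c1 * expR (- (1 / (c2 * j%:R))) by rewrite mulr_gt0 ?expR_gt0.
exists (M / (c1 * expR (- (1 / (c2 * j%:R))))); first by rewrite divr_ge0 ?(ltW e0).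
move=> x n d n1 dn; set rho := Num.sqrt (n + d ^ 2)%:R.
have rho_le : rho <= (j * n)%:R.
  apply: sqrt_nat_le; rewrite -!mulnn.
  have jn : (2 * n <= j * n)%N by rewrite leq_mul2r orbT.
  have := leq_mul jn jn; have := leq_mul dn dn; have : (n <= n * n)%N by rewrite leq_pmulr.
  lia.
have Vj := vol_sqrt_gt0 x (j * n).
set X := expR (- (n + d ^ 2)%:R / (c2 * (j * n)%:R)).
have gauss : vol x rho * (c1 * X) <= vol x (Num.sqrt (j * n)%:R).
  have := vol_mul_gauss_le1 x (sqrtr_ge0 _) rho_le; rewrite sqr_sqrtr ?ler0n // -/X.
  have -> : vol x rho * (c1 / vol x (Num.sqrt (j * n)%:R) * X) =
      vol x rho * (c1 * X) / vol x (Num.sqrt (j * n)%:R) by field; rewrite lt0r_neq0.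
  by rewrite ler_pdivrMr // mul1r.
rewrite [leRHS]mulrAC ler_pdivlMr //.
apply: le_trans (scale x n n1); apply: le_trans gauss.
rewrite -[leLHS]mulrA; apply: ler_wpM2l; first exact: (vol_ge0 _ pi_gt0).
rewrite [leLHS]mulrCA; apply: ler_wpM2l; first exact: ltW.
rewrite -expRD ler_expR /X.
have -> : - (n + d ^ 2)%:R / (c2 * (j * n)%:R) =
    - (1 / (c2 * j%:R)) + - (d%:R ^+ 2 / (c2 * j%:R * n%:R)) :> R.
  by rewrite natrD natrX natrM; field; rewrite !lt0r_neq0 ?ltr0n.
rewrite addrC lerD2l mulNr lerN2; apply: ler_wpM2l; first exact: sqr_ge0.
rewrite lef_pV2 ?posrE ?mulr_gt0 ?ltr0n //.
by apply: ler_wpM2r; rewrite ?ler0n.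
Qed.

End HarnackVolume.

Section DyadicSums.
Variable R : realType.

Lemma sum_half_pow_le2 N : \sum_(k < N) (2^-1 : R) ^+ k <= 2.
Proof.
suff sumE : \sum_(k < N) (2^-1 : R) ^+ k + 2 * (2^-1) ^+ N = 2.
  by rewrite -[leRHS]sumE lerDl mulr_ge0 ?exprn_ge0.
elim: N => [|N IH]; first by rewrite big_ord0 expr0 add0r mulr1.
by rewrite big_ord_recr /= -[RHS]IH -addrA exprS; congr (_ + _); field.
Qed.

(* [a^k <= c^(m+1) q^(m+1)] with [q = 4^k / c], and [q^(m+1) / (m+1)! <= expR q]. *)
Lemma pow_mul_expR_dyadic_bounded (a c : R) : 0 <= a -> 0 < c ->
  exists2 B : R, 1 <= B & forall k : nat, a ^+ k * expR (- (((2 : R) ^+ k) ^+ 2 / c)) <= B.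
Proof.
move=> a0 c0; set m := Num.bound a.
have a_le : a <= 4 ^+ m.+1.
  apply: le_trans (ltW (archi_boundP a0)) _; rewrite -natrX ler_nat -/m.
  by apply: leq_trans (ltnW (ltn_expl m (isT : 1 < 4)%N)) _; rewrite leq_pexp2l.
have f0 : 0 < (m.+1)`!%:R :> R by rewrite ltr0n fact_gt0.
exists (1 + (m.+1)`!%:R * c ^+ m.+1); first by rewrite lerDl mulr_ge0 ?exprn_ge0 ?ltW.
move=> k; set q := ((2 : R) ^+ k) ^+ 2 / c.
have q0 : 0 <= q by rewrite divr_ge0 ?exprn_ge0 ?ltW.
rewrite expRN -ler_pdivlMr ?invr_gt0 ?expR_gt0 // invrK.
have cq : c * q = 4 ^+ k.
  by rewrite /q mulrC mulfVK ?lt0r_neq0 // -exprM mulnC exprM -natrX.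
apply: le_trans (_ : (4 ^+ m.+1) ^+ k <= _); first by rewrite lerXn2r ?nnegrE ?exprn_ge0.
have -> : (4 ^+ m.+1) ^+ k = (m.+1)`!%:R * c ^+ m.+1 * (q ^+ m.+1 / (m.+1)`!%:R).
  rewrite -exprM mulnC exprM -cq exprMn; field; exact: lt0r_neq0.
have qf0 : 0 <= q ^+ m.+1 / (m.+1)`!%:R by rewrite divr_ge0 ?exprn_ge0 // ltW.
apply: le_trans (_ : (1 + (m.+1)`!%:R * c ^+ m.+1) * (q ^+ m.+1 / (m.+1)`!%:R) <= _).
  by apply: ler_wpM2r; rewrite // lerDr ler01.
apply: ler_wpM2l; first by rewrite addr_ge0 // mulr_ge0 ?exprn_ge0 // ltW.
by apply: le_trans _ (expR_ge1Dxn m q0); rewrite lerDr.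
Qed.

(* Bound by the first [k] with [s <= 2^k rho]; for [k >= 1], [r >= s/2 > 2^(k-2) rho]. *)
Lemma gauss_le_dyadic_sum (c nn rho a B : R) :
    0 < c -> 0 < nn -> 0 <= rho -> nn <= rho ^+ 2 ->
    0 < a -> 1 <= B ->
    (forall k : nat, a ^+ k * expR (- (((2 : R) ^+ k) ^+ 2 / (16 * c))) <= B) ->
  forall (N : nat) (s r : R), 0 <= s -> s <= 2 * r -> s <= 2 ^+ N * rho ->
  expR (- (r ^+ 2) / (c * nn)) <= \sum_(k < N.+1) B / a ^+ k * ((s <= 2 ^+ k * rho)%R)%:R.
Proof.
move=> c0 nn0 rho0 nn_rho a0 B1 aB.
have Ba0 k : 0 <= B / a ^+ k.
  by apply: divr_ge0; [exact: le_trans ler01 B1 | apply/exprn_ge0/ltW].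
elim=> [|N IH] s r s0 s_r sN.
  rewrite big_ord1 expr0 divr1 sN mulr1.
  rewrite (le_trans _ B1) // expR_le1 mulNr oppr_le0.
  by rewrite divr_ge0 ?sqr_ge0 ?mulr_ge0 ?ltW.
rewrite big_ord_recr /=; have [sN' | Ns] := lerP s (2 ^+ N * rho).
  by apply: le_trans (IH s r s0 s_r sN') _; rewrite lerDl mulr_ge0.
rewrite sN mulr1; apply: ler_wpDl; first by apply: sumr_ge0 => k _; rewrite mulr_ge0.
have key : ((2 : R) ^+ N) ^+ 2 * nn <= 4 * r ^+ 2.
  apply: le_trans (_ : ((2 : R) ^+ N * rho) ^+ 2 <= _).
    by rewrite exprMn ler_wpM2l ?exprn_ge0.
  have -> : 4 * r ^+ 2 = (2 * r) ^+ 2 by rewrite exprMn -natrX.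
  rewrite lerXn2r ?nnegrE ?mulr_ge0 ?exprn_ge0 ?(le_trans s0 s_r) //.
    by rewrite -(@pmulr_rge0 _ 2) // (le_trans s0 s_r).
  exact: le_trans (ltW Ns) s_r.
rewrite ler_pdivlMr ?exprn_gt0 // mulrC; apply: le_trans (aB N.+1).
apply: ler_wpM2l; first by rewrite exprn_ge0 ?ltW.
rewrite ler_expR !mulNr lerN2 ler_pdivrMr ?mulr_gt0 //.
have -> : r ^+ 2 / (c * nn) * (16 * c) = 4 * (4 * r ^+ 2) / nn.
  by field; rewrite !lt0r_neq0.
rewrite ler_pdivlMr //.
have -> : ((2 : R) ^+ N.+1) ^+ 2 * nn = 4 * (((2 : R) ^+ N) ^+ 2 * nn).
  by rewrite [(2 : R) ^+ N.+1]exprS; ring.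
by rewrite ler_pM2l.
Qed.

End DyadicSums.

Section BoundaryEstimate.
Variables (R : realType) (V : choiceType) (nbrs : V -> seq V).
Variables (mu : V -> V -> R) (pi : V -> R) (K : set V) (c1 c2 c3 c4 Ce D : R).
Local Notation vol := (vol nbrs pi).
Local Notation vol_bdry := (vol_bdry nbrs pi K).
Local Notation dist := (dist nbrs).
Local Notation bdry := (bdry nbrs K).
Hypothesis kern_ge0 : forall x y, 0 <= kern nbrs mu pi x y.
Hypothesis nbrs_irr : forall x, x \notin nbrs x.
Hypothesis adjC : forall u w, adj nbrs u w = adj nbrs w u.
Hypothesis conn : forall x y, exists a, walk nbrs x y a.
Hypothesis pi_gt0 : forall x, 0 < pi x.
Hypotheses (c1_gt0 : 0 < c1) (c2_gt0 : 0 < c2) (c3_gt0 : 0 < c3) (c4_gt0 : 0 < c4).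
Hypothesis harn : forall (n : nat) x y, (dist x y <= n)%N ->
    c1 / vol x (Num.sqrt n%:R) * expR (- ((dist x y)%:R ^+ 2) / (c2 * n%:R))
      <= heat nbrs mu pi n x y /\
    heat nbrs mu pi n x y <=
      c3 / vol x (Num.sqrt n%:R) * expR (- ((dist x y)%:R ^+ 2) / (c4 * n%:R)).
Hypotheses (Ce_gt0 : 0 < Ce) (Ce_le1 : Ce <= 1).
Hypothesis lazy : forall x, Ce <= kern nbrs mu pi x x.
Hypothesis D_gt0 : 0 < D.
Hypothesis doubling : forall z (r : R), bdry z -> 0 < r ->
  vol_bdry z (2 * r) <= D * vol_bdry z r.

Lemma vol_bdry_dyadic_le v (rho : R) k : bdry v -> 0 < rho ->
  vol_bdry v (2 ^+ k * rho) <= D ^+ k * vol_bdry v rho.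
Proof.
move=> bv rho0; elim: k => [|k IH]; first by rewrite !expr0 !mul1r.
rewrite !exprS -!mulrA; apply: le_trans (doubling bv _) _.
  by rewrite mulr_gt0 ?exprn_gt0.
by apply: ler_wpM2l; [exact: ltW | exact: IH].
Qed.

Lemma sum_dyadic_vol_bdry_le (B rho : R) v N : bdry v -> 0 < rho -> 0 <= B ->
  \sum_(k < N) B / (2 * (D + 1)) ^+ k * vol_bdry v (2 ^+ k * rho)
    <= 2 * B * vol_bdry v rho.
Proof.
move=> bv rho0 B0; have a0 : 0 < 2 * (D + 1) by rewrite mulr_gt0 ?addr_gt0.
apply: le_trans (_ : \sum_(k < N) B * vol_bdry v rho * (2^-1) ^+ k <= _); last first.
  rewrite -mulr_sumr mulrC -[2 * B * _]mulrA; apply: ler_wpM2r; last exact: sum_half_pow_le2.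
  by rewrite mulr_ge0 ?(vol_bdry_ge0 _ pi_gt0).
apply: ler_sum => k _; rewrite mulrAC -!mulrA; apply: ler_wpM2l => //.
apply: le_trans (_ : (2 * (D + 1)) ^-1 ^+ k * (D ^+ k * vol_bdry v rho) <= _).
  rewrite [leLHS]mulrC exprVn; apply: ler_wpM2l; last exact: vol_bdry_dyadic_le.
  by rewrite invr_ge0 exprn_ge0 ?ltW.
rewrite mulrA mulrC; apply: ler_wpM2l; first exact: (vol_bdry_ge0 _ pi_gt0).
rewrite -exprMn lerXn2r ?nnegrE ?mulr_ge0 ?invr_ge0 ?ltW //.
by rewrite mulrC ltr_pdivrMr // mulrA mulVf // mul1r ltrDl.
Qed.

Variable B : R.
Hypothesis B_ge1 : 1 <= B.
Hypothesis B_bound : forall k : nat,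
  (2 * (D + 1)) ^+ k * expR (- (((2 : R) ^+ k) ^+ 2 / (16 * (2 * c4)))) <= B.

Definition dyadic_weight (n d : nat) (v w : V) : R :=
  \sum_(k < (2 * n).+1) B / (2 * (D + 1)) ^+ k *
    (((dist v w)%:R <= 2 ^+ k * Num.sqrt (n + d ^ 2)%:R :> R)%R)%:R.

(* Half of the Gaussian decay pays for [d(x,v) <= d(x,w)], the other half for the
   dyadic shell of [d(v,w) <= 2 d(x,w)] around [v]. *)
Lemma kern_pow_le_dyadic x v w (n : nat) : (1 <= n)%N ->
    (dist x v <= dist x w)%N -> (dist x w <= n)%N ->
  kern_pow nbrs mu pi n x w <=
    c3 / vol x (Num.sqrt n%:R) * expR (- ((dist x v)%:R ^+ 2) / (2 * c4 * n%:R))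
    * (pi w * dyadic_weight n (dist x v) v w).
Proof.
move=> n1 vw wn; set d := dist x v; set r := dist x w.
set E := expR _; set S := dyadic_weight _ _ _ _.
have n0 : 0 < n%:R :> R by rewrite ltr0n.
have vw2 : (dist v w <= 2 * r)%N.
  rewrite (leq_trans (dist_triangle conn v x w)) // (dist_sym adjC conn v x).
  by rewrite mul2n -addnn leq_add2r.
have decay : expR (- (r%:R ^+ 2) / (c4 * n%:R)) <= E * S.
  have split_decay : expR (- (r%:R ^+ 2) / (c4 * n%:R)) =
      expR (- (r%:R ^+ 2) / (2 * c4 * n%:R)) * expR (- (r%:R ^+ 2) / (2 * c4 * n%:R)).
    by rewrite -expRD; congr expR; field; rewrite !lt0r_neq0.
  rewrite split_decay; apply: ler_pM; rewrite ?expR_ge0 //.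
    rewrite ler_expR !mulNr lerN2; apply: ler_wpM2r; first by rewrite invr_ge0 !mulr_ge0 ?ltW.
    by rewrite -!natrX ler_nat leq_exp2r.
  have rho1 : 1 <= Num.sqrt (n + d ^ 2)%:R :> R.
    by rewrite -[leLHS]sqrtr1 ler_sqrt ?ler0n // ler1n (leq_trans n1) ?leq_addr.
  apply: (gauss_le_dyadic_sum _ n0 _ _ _ B_ge1 B_bound); rewrite ?mulr_gt0 ?addr_gt0 //.
  - by rewrite sqr_sqrtr ?ler0n // ler_nat leq_addr.
  - by rewrite -natrM ler_nat.
  - apply: le_trans (_ : (2 ^ (2 * n))%:R <= _).
      rewrite ler_nat (leq_trans vw2) // (@leq_trans (2 * n)) ?leq_mul2l ?wn //.
      by rewrite ltnW // ltn_expl.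
    by rewrite natrX -[leLHS]mulr1 ler_wpM2l ?exprn_ge0.
apply: le_trans (_ : c3 / vol x (Num.sqrt n%:R) * expR (- (r%:R ^+ 2) / (c4 * n%:R))
    * pi w <= _).
  by have [_] := harn wn; rewrite /heat ler_pdivrMr.
rewrite mulrAC (_ : _ * E * _ = c3 / vol x (Num.sqrt n%:R) * pi w * (E * S)); last by ring.
have V0 := vol_sqrt_gt0 conn pi_gt0 x n.
by apply: ler_wpM2l decay; rewrite mulr_ge0 // ?divr_ge0 // ltW.
Qed.

Section FromOutside.
Variables (x v : V).
Hypotheses (bv : bdry v) (v_closest : forall k, K k -> (dist x v <= dist x k)%N).

Lemma prob_bdry_eq0 n : (n < dist x v)%N -> prob_in nbrs mu pi bdry n x = 0.
Proof.
move=> nd; rewrite (prob_inE mu pi bdry (undup_uniq (reach nbrs n x))) => [|w]; last first.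
  by rewrite mem_undup.
rewrite big1_seq // => w /andP [_]; rewrite mem_undup => /reach_dist wn.
case: (asboolP (bdry w)) => [[Kw _] | _]; last by rewrite mulr0.
by move: (leq_trans (v_closest Kw) wn); rewrite leqNgt nd.
Qed.

Lemma prob_bdry_le n : (1 <= n)%N ->
  prob_in nbrs mu pi bdry n x <=
    c3 / vol x (Num.sqrt n%:R) * expR (- ((dist x v)%:R ^+ 2) / (2 * c4 * n%:R))
    * (2 * B * vol_bdry v (Num.sqrt (n + dist x v ^ 2)%:R)).
Proof.
move=> n1; set P := _ * expR _; set rho := Num.sqrt _.
set L := undup (reach nbrs n x); have uL : uniq L by apply: undup_uniq.
rewrite (prob_inE mu pi bdry uL) => [|w]; last by rewrite mem_undup.
have P0 : 0 <= P by rewrite mulr_ge0 ?expR_ge0 // divr_ge0 ?ltW ?vol_sqrt_gt0.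
apply: le_trans (_ : \sum_(w <- L)
    P * (pi w * `[< bdry w >]%:R * dyadic_weight n (dist x v) v w) <= _).
  rewrite big_seq [leRHS]big_seq; apply: ler_sum => w; rewrite mem_undup => /reach_dist wn.
  case: (asboolP (bdry w)) => [[Kw _] | _]; last by rewrite !(mulr0, mul0r).
  by rewrite !mulr1; apply: kern_pow_le_dyadic => //; apply: v_closest.
rewrite -mulr_sumr; apply: ler_wpM2l => //.
have rho0 : 0 < rho by rewrite sqrtr_gt0 ltr0n addn_gt0 n1.
set a := fun k : nat => B / (2 * (D + 1)) ^+ k.
apply: le_trans (_ : \sum_(k < (2 * n).+1) a k * vol_bdry v (2 ^+ k * rho) <= _); last first.
  by apply: sum_dyadic_vol_bdry_le => //; apply: le_trans ler01 B_ge1.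
have a0 k : 0 <= a k.
  by rewrite divr_ge0 ?exprn_ge0 ?(le_trans ler01 B_ge1) // mulr_ge0 ?addr_ge0 ?ltW.
rewrite (eq_bigr (fun w => \sum_(k < (2 * n).+1) a k *
    (pi w * (`[< bdry w >] && ((dist v w)%:R <= 2 ^+ k * rho)%R)%:R))); last first.
  move=> w _; rewrite /dyadic_weight mulr_sumr; apply: eq_bigr => k _.
  by rewrite -mulnb natrM /a /rho; ring.
rewrite exchange_big /=; apply: ler_sum => k _; rewrite -mulr_sumr; apply: ler_wpM2l => //.
rewrite (eq_bigr (fun w =>
    if `[< bdry w >] && ((dist v w)%:R <= 2 ^+ k * rho) then pi w else 0)); last first.
  by move=> w _; case: ifP; rewrite ?mulr1 ?mulr0.
rewrite -big_mkcond -big_filter; apply: sum_le_vol_bdry => //; first exact: filter_uniq.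
by move=> w; rewrite mem_filter => /andP [/andP [/asboolP bw wk] _].
Qed.

End FromOutside.

Lemma prob_bdry_le_Wtilde : exists2 C : R, 0 <= C & forall x v (n : nat),
    bdry v -> (forall k, K k -> (dist x v <= dist x k)%N) -> (1 <= n)%N ->
  prob_in nbrs mu pi bdry n x <= C / Wtilde nbrs pi K x v (Num.sqrt (n + dist x v ^ 2)%:R).
Proof.
have [M M0 shift] := vol_shift_le kern_ge0 nbrs_irr conn pi_gt0 c1_gt0 c2_gt0 c3_gt0 c4_gt0
  harn Ce_gt0 Ce_le1 lazy.
have B0 : 0 <= B := le_trans ler01 B_ge1.
set C := c3 * M * (2 * B).
have C0 : 0 <= C by apply: mulr_ge0; [apply: mulr_ge0 => //; exact: ltW | exact: mulr_ge0].
exists C => // x v n bv v_closest n1; set rho := Num.sqrt _.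
have Vb0 : 0 <= vol_bdry v rho := vol_bdry_ge0 _ pi_gt0 _ _ _.
rewrite /Wtilde invf_div; have [dn | nd] := leqP (dist x v) n; last first.
  by rewrite (prob_bdry_eq0 v_closest nd) (mulr_ge0 C0 (divr_ge0 Vb0 (vol_ge0 _ pi_gt0 _ _))).
apply: le_trans (prob_bdry_le bv v_closest n1) _.
have Vn := vol_sqrt_gt0 conn pi_gt0 x n.
have Vrho := vol_sqrt_gt0 conn pi_gt0 x (n + dist x v ^ 2).
set E := expR _; have decay : E / vol x (Num.sqrt n%:R) <= M / vol x rho.
  by rewrite ler_pdivrMr // mulrAC ler_pdivlMr // mulrC shift.
rewrite (_ : C * _ = c3 * (M / vol x rho) * (2 * B * vol_bdry v rho)); last by rewrite /C; ring.
rewrite (_ : _ * E * _ = c3 * (E / vol x (Num.sqrt n%:R)) * (2 * B * vol_bdry v rho));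
  last by ring.
apply: ler_wpM2r; first exact: mulr_ge0 (mulr_ge0 _ B0) Vb0.
by apply: ler_wpM2l decay; apply: ltW.
Qed.

End BoundaryEstimate.

Lemma sup_le_nneseries (R : realType) (u t : nat -> R) (N : nat) :
    (forall n, 0 <= t n) -> (forall m, u m <= \sum_(N <= i < N + m.+1) t i) ->
  ((sup [set u n | n in [set: nat]])%:E <= \sum_(N <= n <oo) (t n)%:E)%E.
Proof.
move=> t0 ut; have partial m : ((u m)%:E <= \sum_(N <= n <oo) (t n)%:E)%E.
  apply: le_trans (_ : ((\sum_(N <= i < N + m.+1) t i)%:E <= _)%E); first by rewrite lee_fin.
  by rewrite -sumEFin; apply: nneseries_lim_ge => n _ _; rewrite lee_fin.
have : (0 <= \sum_(N <= n <oo) (t n)%:E)%E by apply: nneseries_ge0 => n _ _; rewrite lee_fin.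
move: partial; case: (\sum_(N <= n <oo) _)%E => [s| |] // partial _; last exact: leey.
rewrite lee_fin; apply: ge_sup; first by exists (u 0%N), 0%N.
by move=> _ [n _ <-]; rewrite -lee_fin.
Qed.

Lemma controlled_lazy_kern_ge0 (R : realType) (V : choiceType) (nbrs : V -> seq V)
    (mu : V -> V -> R) (pi : V -> R) :
    weights_ok nbrs mu pi -> controlled nbrs mu pi -> uniformly_lazy nbrs mu pi ->
  forall x y, 0 <= kern nbrs mu pi x y.
Proof.
move=> [_ [mu_adj _]] [Cc [Cc1 ctrl]] [Ce [/andP [Ce0 _] lazy]] x y.
have [->|yx] := eqVneq y x; first exact: le_trans (ltW Ce0) (lazy x).
rewrite /kern (negbTE yx); have [xy | nxy] := boolP (adj nbrs x y).
  by apply: le_trans (ctrl x y xy); rewrite divr_ge0 ?(le_trans ler01 (ltW Cc1)).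
suff -> : mu x y = 0 by rewrite mul0r.
by apply/eqP; apply: contraNT nxy => /(proj1 (mu_adj x y)).
Qed.

Theorem corollary2p11 (R : realType) (V : choiceType) (nbrs : V -> seq V)
  (mu : V -> V -> R) (pi : V -> R) (K : set V) :
  ~ finite_set [set: V] ->
  simple_graph nbrs ->
  connected_graph nbrs ->
  weights_ok nbrs mu pi ->
  controlled nbrs mu pi ->
  uniformly_lazy nbrs mu pi ->
  harnack nbrs mu pi ->
  (exists D : R, 0 < D /\ forall (z : V) (r : R), bdry nbrs K z -> 0 < r ->
     vol_bdry nbrs pi K z (2 * r) <= D * vol_bdry nbrs pi K z r) ->
  exists C : R, forall x v : V,
    in_Gamma K x -> ~ inner_bdry nbrs K x ->
    bdry nbrs K v -> (forall k, K k -> (dist nbrs x v <= dist nbrs x k)%N) ->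
    ((psiK nbrs mu pi K x)%:E <=
      \sum_((dist nbrs x v) ^ 2 <= n <oo)
         (C / Wtilde nbrs pi K x v (Num.sqrt n%:R))%:E)%E.
Proof.
move=> _ [_ [nbrs_irr adjC]] conn w_ok ctrl lz harn_ex [D [D0 doubling]].
have k0 := controlled_lazy_kern_ge0 w_ok ctrl lz; have [_ [_ [pi_gt0 _]]] := w_ok.
have [Ce [/andP [Ce0 Ce1] lazy]] := lz.
have [c1 [c2 [c3 [c4 [[c10 c20 c30 c40] harn]]]]] := harn_ex.
have [B B1 B_bound] := @pow_mul_expR_dyadic_bounded R (2 * (D + 1)) (16 * (2 * c4))
  (mulr_ge0 (ler0n R 2) (addr_ge0 (ltW D0) ler01))
  (mulr_gt0 (ltr0n R 16) (mulr_gt0 (ltr0n R 2) c40)).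
have [C C0 bound] := prob_bdry_le_Wtilde k0 nbrs_irr adjC conn pi_gt0 c10 c20 c30 c40 harn
  Ce0 (ltW Ce1) lazy D0 doubling B1 B_bound.
exists C => x v xK _ bv v_closest; apply: sup_le_nneseries => [n | m].
  by rewrite divr_ge0 // divr_ge0 ?(vol_ge0 _ pi_gt0) ?(vol_bdry_ge0 _ pi_gt0).
apply: le_trans (hit_by_le_sum_prob_in k0 adjC m (fun Kx => False_ind _ (xK Kx))) _.
rewrite -{1}[(dist nbrs x v ^ 2)%N]add0n big_addn addKn big_mkord.
apply: ler_sum => -[[|i] ?] _.
  rewrite /= asboolF ?(divr_ge0 C0) //; last by case.
  by rewrite /Wtilde divr_ge0 ?(vol_ge0 _ pi_gt0) ?(vol_bdry_ge0 _ pi_gt0).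
exact: bound.
Qed.
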